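(* Let $\mathbb M=(V,d)$ be a binary structure and let $X,Y$ be disjoint non-empty modules of $\mathbb M$. Suppose $Y$ is a robust module with at least two elements whose Gallai quotient is not prime and such that $\{d(X,Y),d(Y,X)\}=t(Y)$. Then $X\cup Y$ is not a module of $\mathbb M$.
   Context: A binary structure over a set $W$ is a pair $\mathbb M=(V,d)$ with $d:V\times V\to W$. A module of $\mathbb M$ is a set $A\subseteq V$ such that $d(x,y)=d(x,y')$ and $d(y,x)=d(y',x)$ for all $x\in V\setminus A$ and $y,y'\in A$. A module is strong if for every module $B$, either $A\subseteq B$, $B\subseteq A$, or $A\cap B=\emptyset$. For $Z\subseteq V$, $S_{\mathbb M}(Z)$ is the intersection of all strong modules containing $Z$. A module is robust if it is a singleton or equals $S_{\mathbb M}(\{x,y\})$ for some distinct $x,y\in V$. For disjoint non-empty modules $X,Y$, $d(X,Y)$ denotes the common value of $d(x,y)$ for $x\in X$, $y\in Y$. For a strong module $A$ and $x,y\in A$, put $x\equiv_A y$ iff $x=y$ or some strong module containing $x,y$ is properly contained in $A$; the classes (components of $A$) are modules, and a robust $A$ with $|A|\ge 2$ has at least two components. The Gallai quotient of such $A$ is the binary structure on its set of components given by $(I,J)\mapsto d(I,J)$ for $I\ne J$; it is prime if it has at least three elements and only trivial modules (empty, singletons, whole set). If the Gallai quotient of $A$ is not prime, the type of $A$ is $t(A)=\{d(I,J): I,J$ distinct components of $A\}$. *)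

Set Implicit Arguments.

Section BinStruct.
Variables (V W : Type) (d : V -> V -> W).

Definition subset (A B : V -> Prop) : Prop := forall x, A x -> B x.
Definition disjoint (A B : V -> Prop) : Prop := forall x, A x -> B x -> False.
Definition set_eq (A B : V -> Prop) : Prop := forall x, A x <-> B x.

Definition is_module (A : V -> Prop) : Prop :=
  forall x y y', ~ A x -> A y -> A y' -> d x y = d x y' /\ d y x = d y' x.

Definition is_strong (A : V -> Prop) : Prop :=
  is_module A /\
  forall B, is_module B -> subset A B \/ subset B A \/ disjoint A B.

Definition S_M (Z : V -> Prop) : V -> Prop :=
  fun z => forall B, is_strong B -> subset Z B -> B z.

Definition is_robust (A : V -> Prop) : Prop :=
  is_module A /\
  ((exists x, set_eq A (fun z => z = x)) \/
   (exists x y, x <> y /\ set_eq A (S_M (fun z => z = x \/ z = y)))).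

Definition compeq (A : V -> Prop) (x y : V) : Prop :=
  x = y \/
  exists B, is_strong B /\ B x /\ B y /\ subset B A /\ ~ subset A B.

Definition comp (A : V -> Prop) (x : V) : V -> Prop :=
  fun y => A y /\ compeq A x y.

(* the set of components of A (vertex set of the Gallai quotient) *)
Definition components (A : V -> Prop) : (V -> Prop) -> Prop :=
  fun C => exists x, A x /\ C = comp A x.

(* the set of values d(x,y), x in X, y in Y; for disjoint non-empty modules
   this is the singleton {d(X,Y)} *)
Definition dval (X Y : V -> Prop) : W -> Prop :=
  fun w => exists x y, X x /\ Y y /\ d x y = w.

(* Q is a module of the Gallai quotient of A, whose arcs are labelled by
   (I,J) |-> d(I,J) *)
Definition quotient_module (A : V -> Prop) (Q : (V -> Prop) -> Prop) : Prop :=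
  (forall I, Q I -> components A I) /\
  forall I J J', components A I -> ~ Q I -> Q J -> Q J' ->
    dval I J = dval I J' /\ dval J I = dval J' I.

Definition quotient_prime (A : V -> Prop) : Prop :=
  (exists I1 I2 I3, components A I1 /\ components A I2 /\ components A I3 /\
     I1 <> I2 /\ I1 <> I3 /\ I2 <> I3) /\
  forall Q, quotient_module A Q ->
    (forall I, ~ Q I) \/
    (exists I0, forall I, Q I <-> I = I0) \/
    (forall I, Q I <-> components A I).

Definition type_of (A : V -> Prop) : W -> Prop :=
  fun w => exists I J, components A I /\ components A J /\ I <> J /\ dval I J w.

End BinStruct.

From Stdlib Require Import Classical FunctionalExtensionality PropExtensionality.

(* Y = S({p,q}) is strong, and a non-prime Gallai quotient yields a split of Y:
   a bipartition Y = C + C' with d(C,C') = a and d(C',C) = b constant. Both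
   labels lie in t(Y) = {d(X,Y), d(Y,X)}. If a = b, the splits with constant
   label a are closed under intersection and complement, and a minimality
   argument shows that every label between distinct components of Y is a, so
   d(X,Y) = d(Y,X) = a. Hence, possibly after exchanging C and C', we may take
   (a,b) = (d(X,Y), d(Y,X)); but then, if X \/ Y were a module, so would be
   X \/ C, which meets the strong module Y without being comparable to it. *)

Section BinaryStructure.
Context {V W : Type} (d : V -> V -> W).

Definition overlaps (A B : V -> Prop) : Prop :=
  (exists x, A x /\ B x) /\ (exists x, A x /\ ~ B x) /\ (exists x, B x /\ ~ A x).

Lemma module_of_base {A : V -> Prop} {p} : A p ->
  (forall x t, ~ A x -> A t -> d x t = d x p /\ d t x = d p x) -> is_module d A.
Proof.
  intros Ap H x y y' nAx Ay Ay'.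
  destruct (H x y nAx Ay), (H x y' nAx Ay'). split; congruence.
Qed.

Lemma module_union {A B : V -> Prop} {p} :
  is_module d A -> is_module d B -> A p -> B p -> is_module d (fun z => A z \/ B z).
Proof.
  intros HA HB Ap Bp. apply (@module_of_base _ p (or_introl Ap)).
  intros x t nx [At|Bt]; [apply HA|apply HB]; auto.
Qed.

Lemma module_setD {A B : V -> Prop} {y} :
  is_module d A -> is_module d B -> B y -> ~ A y -> is_module d (fun z => A z /\ ~ B z).
Proof.
  intros HA HB By nAy z x x' nz [Ax nBx] [Ax' nBx'].
  destruct (classic (A z)) as [Az|nAz]; [|apply HA; auto].
  assert (Bz : B z) by (apply NNPP; intro; apply nz; auto).
  destruct (HB x z y nBx Bz By), (HB x' z y nBx' Bz By), (HA y x x' nAy Ax Ax').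
  split; congruence.
Qed.

Lemma module_cross {A B : V -> Prop} {a b x y} :
  is_module d A -> is_module d B -> disjoint A B -> A a -> B b -> A x -> B y ->
  d x y = d a b.
Proof.
  intros HA HB dAB Aa Bb Ax By.
  destruct (HA y x a (fun Ay => dAB y Ay By) Ax Aa) as [_ e1].
  destruct (HB a y b (fun Ba => dAB a Aa Ba) By Bb) as [e2 _].
  congruence.
Qed.

Lemma dval_modules {A B : V -> Prop} {a b} w :
  is_module d A -> is_module d B -> disjoint A B -> A a -> B b ->
  dval d A B w <-> d a b = w.
Proof.
  intros HA HB dAB Aa Bb. split.
  - intros [x [y [Ax [By <-]]]]. symmetry. exact (module_cross HA HB dAB Aa Bb Ax By).
  - intros <-. exists a, b. auto.
Qed.

Lemma sub_strong {Y B : V -> Prop} {n y} :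
  is_strong d Y -> is_module d B -> B n -> Y n -> Y y -> ~ B y -> subset B Y.
Proof.
  intros [_ SY] HB Bn Yn Yy nBy.
  destruct (SY B HB) as [s|[s|s]]; [exfalso; auto|exact s|exfalso; exact (s n Yn Bn)].
Qed.

(* If B meets Y, each strong T containing Z contains Y, hence meets B without
   lying inside it; so B lies in every such T, i.e. in Y. *)
Lemma S_M_strong {Y Z : V -> Prop} :
  is_module d Y -> set_eq Y (S_M d Z) -> is_strong d Y.
Proof.
  intros HY Heq. split; [exact HY|]. intros B HB.
  destruct (classic (subset Y B)) as [YB|nYB]; [left; exact YB|].
  destruct (classic (subset B Y)) as [BY|nBY]; [right; left; exact BY|].
  right; right. intros y Yy By. apply nBY. intros b Bb.
  apply (proj2 (Heq b)). intros T [HT ST] ZT.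
  assert (YT : subset Y T) by (intros z Yz; exact (proj1 (Heq z) Yz T (conj HT ST) ZT)).
  destruct (ST B HB) as [TB|[BT|dTB]].
  - exfalso. apply nYB. intros z Yz. exact (TB z (YT z Yz)).
  - exact (BT b Bb).
  - exfalso. exact (dTB y (YT y Yy) By).
Qed.

Lemma S_M_pair_sep {Y : V -> Prop} {p q} :
  p <> q -> set_eq Y (S_M d (fun z => z = p \/ z = q)) ->
  Y p /\ Y q /\ ~ compeq d Y p q.
Proof.
  intros npq HYS.
  assert (Yp : Y p) by (apply HYS; intros B _ sub; apply sub; left; auto).
  assert (Yq : Y q) by (apply HYS; intros B _ sub; apply sub; right; auto).
  split; [auto|split; [auto|]].
  intros [e|[B [SB [Bp [Bq [_ nYB]]]]]]; [auto|].
  apply nYB. intros z Yz. apply (proj1 (HYS z) Yz B SB).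
  intros t [-> | ->]; auto.
Qed.

Lemma robust_pair {Y : V -> Prop} {y1 y2} :
  is_robust d Y -> Y y1 -> Y y2 -> y1 <> y2 ->
  is_strong d Y /\ exists p q, Y p /\ Y q /\ ~ compeq d Y p q.
Proof.
  intros [HY [[x HYx]|[p [q [npq HYS]]]]] Yy1 Yy2 n12.
  - exfalso. apply n12. rewrite (proj1 (HYx y1) Yy1), (proj1 (HYx y2) Yy2). reflexivity.
  - split; [exact (S_M_strong HY HYS)|exists p, q; exact (S_M_pair_sep npq HYS)].
Qed.

Lemma compeq_sym {A : V -> Prop} {x y} : compeq d A x y -> compeq d A y x.
Proof.
  intros [e|[B [SB [Bx [By AB]]]]]; [left; auto|right; exists B; auto].
Qed.

Lemma compeq_trans {A : V -> Prop} {x y z} :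
  compeq d A x y -> compeq d A y z -> compeq d A x z.
Proof.
  intros [<-|[B1 [S1 [B1x [B1y A1]]]]]; [auto|].
  intros [<-|[B2 [S2 [B2y [B2z A2]]]]]; [right; exists B1; auto|].
  destruct (proj2 S1 B2 (proj1 S2)) as [h|[h|h]].
  - right. exists B2. auto.
  - right. exists B1. auto.
  - exfalso. exact (h y B1y B2y).
Qed.

Lemma comp_refl {A : V -> Prop} {x} : A x -> comp d A x x.
Proof. split; [auto|left; auto]. Qed.

Lemma comp_eq {A : V -> Prop} {x y} : compeq d A x y -> comp d A x = comp d A y.
Proof.
  intros c. extensionality z. apply propositional_extensionality.
  split; intros [Az cz]; split; auto.
  - exact (compeq_trans (compeq_sym c) cz).
  - exact (compeq_trans c cz).
Qed.

Lemma comp_neq {A : V -> Prop} {x y} : A y -> ~ compeq d A x y -> comp d A x <> comp d A y.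
Proof.
  intros Ay nxy e. assert (h : comp d A x y) by (rewrite e; apply comp_refl; auto).
  exact (nxy (proj2 h)).
Qed.

Lemma comp_module {A : V -> Prop} {x} : is_module d A -> A x -> is_module d (comp d A x).
Proof.
  intros HA Ax. apply (@module_of_base _ x (comp_refl Ax)).
  intros z t nz [At [<-|[B [SB [Bx [Bt [BA nAB]]]]]]]; [split; auto|].
  destruct (classic (A z)) as [Az|nAz]; [|apply HA; auto].
  assert (nBz : ~ B z) by (intro Bz; apply nz; split; [auto|right; exists B; auto]).
  apply (proj1 SB); auto.
Qed.

Lemma comp_dval {A : V -> Prop} {s t} w :
  is_module d A -> A s -> A t -> ~ compeq d A s t ->
  dval d (comp d A s) (comp d A t) w <-> d s t = w.
Proof.
  intros HA As At nst. apply dval_modules; auto using comp_module, comp_refl.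
  intros z [_ sz] [_ tz]. exact (nst (compeq_trans sz (compeq_sym tz))).
Qed.

Lemma type_of_intro {Y : V -> Prop} {s t} :
  is_module d Y -> Y s -> Y t -> ~ compeq d Y s t -> type_of d Y (d s t).
Proof.
  intros HY Ys Yt nst. exists (comp d Y s), (comp d Y t).
  split; [exists s; auto|split; [exists t; auto|split]].
  - exact (comp_neq Yt nst).
  - apply comp_dval; auto.
Qed.

Lemma type_of_inv {Y : V -> Prop} {w} : is_module d Y -> type_of d Y w ->
  exists s t, Y s /\ Y t /\ ~ compeq d Y s t /\ d s t = w.
Proof.
  intros HY [I [J [[s [Ys ->]] [[t [Yt ->]] [IJ Dw]]]]].
  assert (nst : ~ compeq d Y s t) by (intro c; exact (IJ (comp_eq c))).
  exists s, t. repeat split; auto. apply (comp_dval w HY Ys Yt nst). exact Dw.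
Qed.

(* Otherwise S would be a strong module witnessing s ==_Y t. *)
Lemma overlapping_module {Y S : V -> Prop} {s t k} :
  is_module d S -> subset S Y -> Y k -> ~ S k -> S s -> S t -> ~ compeq d Y s t ->
  exists R, is_module d R /\ overlaps S R.
Proof.
  intros HS SY Yk nSk Ss St nst. apply NNPP. intro no.
  apply nst. right. exists S.
  split; [split; [exact HS|]|repeat split; auto; intro YS; exact (nSk (YS k Yk))].
  intros B HB.
  destruct (classic (exists x, S x /\ B x)) as [m|nm];
    [|right; right; intros x Sx Bx; apply nm; eauto].
  destruct (classic (exists x, S x /\ ~ B x)) as [a|na];
    [|left; intros x Sx; apply NNPP; intro; apply na; eauto].
  destruct (classic (exists x, B x /\ ~ S x)) as [b|nb];
    [|right; left; intros x Bx; apply NNPP; intro; apply nb; eauto].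
  exfalso. apply no. exists B. exact (conj HB (conj m (conj a b))).
Qed.

Definition max_module (u v : V) : V -> Prop :=
  fun z => exists B, is_module d B /\ B u /\ ~ B v /\ B z.

Lemma max_module_module u v : is_module d (max_module u v).
Proof.
  intros z y y' nz [B1 [M1 [u1 [v1 y1]]]] [B2 [M2 [u2 [v2 y2]]]].
  assert (z1 : ~ B1 z) by (intro; apply nz; exists B1; auto).
  assert (z2 : ~ B2 z) by (intro; apply nz; exists B2; auto).
  destruct (M1 z y u z1 y1 u1), (M2 z y' u z2 y2 u2). split; congruence.
Qed.

Lemma max_module_notin {u v} : ~ max_module u v v.
Proof. intros [B [_ [_ [nBv Bv]]]]. auto. Qed.

Lemma max_module_self {u v z} : max_module u v z -> max_module u v u.
Proof. intros [B [HB [Bu [nBv _]]]]. exists B. auto. Qed.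

Lemma max_module_absorb {u v} {B : V -> Prop} {z} :
  is_module d B -> B z -> max_module u v z -> ~ B v -> subset B (max_module u v).
Proof.
  intros HB Bz [B0 [H0 [B0u [nB0v B0z]]]] nBv x Bx.
  exists (fun y => B0 y \/ B y). split; [exact (module_union H0 HB B0z Bz)|].
  split; [left; auto|split; [intros [h|h]; auto|right; auto]].
Qed.

Lemma max_module_sub {Y : V -> Prop} {u v} :
  is_strong d Y -> Y u -> Y v -> subset (max_module u v) Y.
Proof.
  intros SY Yu Yv z [B [HB [Bu [nBv Bz]]]].
  exact (sub_strong SY HB Bu Yu Yv nBv z Bz).
Qed.

(* [R] minus [max_module u v] is a module containing [v] and not [u], hence it
   lies in [max_module v u]. *)
Lemma max_module_setD_contra {u v} {R : V -> Prop} {r w} :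
  is_module d R -> R v -> R r -> ~ max_module u v r -> ~ max_module v u r ->
  max_module u v w -> ~ R w -> False.
Proof.
  intros HR Rv Rr nLr nKr Lw nRw. apply nKr.
  exists (fun z => R z /\ ~ max_module u v z).
  split; [exact (module_setD HR (max_module_module u v) Lw nRw)|].
  split; [split; [auto|apply max_module_notin]|].
  split; [intros [_ h]; exact (h (max_module_self Lw))|auto].
Qed.

(* Otherwise the union of the two maximal modules is overlapped by a module R;
   by maximality R contains both w and r, which [max_module_setD_contra]
   forbids. *)
Lemma max_module_cover {Y : V -> Prop} {w r n} :
  is_strong d Y -> Y w -> Y r -> ~ compeq d Y w r ->
  max_module w r n -> max_module r w n ->
  forall y, Y y -> max_module w r y \/ max_module r w y.
Proof.
  intros SY Yw Yr nwr Ln Kn y Yy. apply NNPP. intro ny.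
  assert (Lw : max_module w r w) by exact (max_module_self Ln).
  assert (Kr : max_module r w r) by exact (max_module_self Kn).
  assert (PY : subset (fun z => max_module w r z \/ max_module r w z) Y).
  { intros z [Lz|Kz]; [exact (max_module_sub SY Yw Yr z Lz)|exact (max_module_sub SY Yr Yw z Kz)]. }
  destruct (overlapping_module
              (module_union (max_module_module w r) (max_module_module r w) Ln Kn)
              PY Yy ny (or_introl Lw) (or_intror Kr) nwr)
    as [R [HR [[p [Pp Rp]] [[w' [Pw' nRw']] [r' [Rr' nPr']]]]]].
  assert (nLr' : ~ max_module w r r') by (intro; apply nPr'; left; auto).
  assert (nKr' : ~ max_module r w r') by (intro; apply nPr'; right; auto).
  assert (pull : forall u v z, R z -> max_module u v z -> ~ max_module u v r' -> R v).
  { intros u v z Rz Mz nMr'. apply NNPP. intro nRv.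
    exact (nMr' (max_module_absorb HR Rz Mz nRv r' Rr')). }
  assert (Rwr : R w /\ R r).
  { destruct Pp as [Lp|Kp].
    - assert (Rr := pull w r p Rp Lp nLr'). split; [exact (pull r w r Rr Kr nKr')|auto].
    - assert (Rw := pull r w p Rp Kp nKr'). split; [auto|exact (pull w r w Rw Lw nLr')]. }
  destruct Rwr as [Rw Rr], Pw' as [Lw'|Kw'].
  - exact (max_module_setD_contra HR Rr Rr' nLr' nKr' Lw' nRw').
  - exact (max_module_setD_contra HR Rw Rr' nKr' nLr' Kw' nRw').
Qed.

Definition is_split (Y : V -> Prop) (a b : W) (C : V -> Prop) : Prop :=
  subset C Y /\ forall x y, C x -> Y y -> ~ C y -> d x y = a /\ d y x = b.

Lemma split_compl {Y C : V -> Prop} {a b} :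
  is_split Y a b C -> is_split Y b a (fun z => Y z /\ ~ C z).
Proof.
  intros [CY HC]. split; [intros z [h _]; auto|].
  intros x y [Yx nCx] Yy nC'y.
  assert (Cy : C y) by (apply NNPP; intro; apply nC'y; auto).
  destruct (HC y x Cy Yx nCx). auto.
Qed.

Lemma split_module {Y C : V -> Prop} {a b} :
  is_module d Y -> is_split Y a b C -> is_module d C.
Proof.
  intros HY [CY HC] z x x' nCz Cx Cx'.
  destruct (classic (Y z)) as [Yz|nYz]; [|apply HY; auto].
  destruct (HC x z Cx Yz nCz), (HC x' z Cx' Yz nCz). split; congruence.
Qed.

Lemma split_bigcap {Y : V -> Prop} {a b} {F : (V -> Prop) -> Prop} :
  (forall S, F S -> is_split Y a b S) ->
  is_split Y a b (fun z => Y z /\ forall S, F S -> S z).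
Proof.
  intros HF. split; [intros z [h _]; auto|].
  intros x y [Yx Fx] Yy nFy.
  assert (ex : exists S, F S /\ ~ S y).
  { apply NNPP. intro no. apply nFy. split; [auto|].
    intros S FS. apply NNPP. intro. apply no. eauto. }
  destruct ex as [S [FS nSy]]. exact (proj2 (HF S FS) x y (Fx S FS) Yy nSy).
Qed.

(* Y being strong, a split module C would otherwise lie in the strong module B
   witnessing u ==_Y v, and so would its complement. *)
Lemma split_sep {Y C : V -> Prop} {a b u v} :
  is_module d Y -> is_strong d Y -> is_split Y a b C -> C u -> Y v -> ~ C v ->
  ~ compeq d Y u v.
Proof.
  intros HY SY HC Cu Yv nCv [<-|[B [[HB SB] [Bu [Bv [BY nYB]]]]]]; [auto|].
  assert (inB : forall D, is_module d D -> D u \/ D v -> ~ D u \/ ~ D v -> subset D B).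
  { intros D HD Duv nDuv. destruct (SB D HD) as [BD|[DB|dBD]]; [exfalso|exact DB|exfalso].
    - destruct nDuv as [h|h]; apply h, BD; auto.
    - destruct Duv as [h|h]; [exact (dBD u Bu h)|exact (dBD v Bv h)]. }
  apply nYB. intros z Yz.
  destruct (classic (C z)) as [Cz|nCz].
  - exact (inB C (split_module HY HC) (or_introl Cu) (or_intror nCv) z Cz).
  - refine (inB _ (split_module HY (split_compl HC)) (or_intror (conj Yv nCv)) _ z (conj Yz nCz)).
    left. intros [_ h]. auto.
Qed.

Lemma split_type {Y C : V -> Prop} {a b u v} :
  is_module d Y -> is_strong d Y -> is_split Y a b C -> C u -> Y v -> ~ C v ->
  type_of d Y a /\ type_of d Y b.
Proof.
  intros HY SY HC Cu Yv nCv.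
  assert (Yu : Y u) by exact (proj1 HC u Cu).
  assert (nuv := split_sep HY SY HC Cu Yv nCv).
  destruct (proj2 HC u v Cu Yv nCv) as [<- <-].
  split; apply type_of_intro; auto. intro c. exact (nuv (compeq_sym c)).
Qed.

Lemma split_meet_module {Y N S0 R : V -> Prop} {c r} :
  is_split Y c c N -> is_split Y c c S0 -> subset N S0 ->
  is_module d R -> R r -> Y r -> ~ S0 r ->
  is_split Y c c (fun z => N z /\ R z).
Proof.
  intros HN HS0 NS0 HR Rr Yr nS0r.
  split; [intros z [Nz _]; exact (proj1 HN z Nz)|].
  intros x y [Nx Rx] Yy nNRy.
  destruct (classic (N y)) as [Ny|nNy]; [|exact (proj2 HN x y Nx Yy nNy)].
  assert (nRy : ~ R y) by (intro; apply nNRy; auto).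
  destruct (HR y x r nRy Rx Rr).
  destruct (proj2 HS0 y r (NS0 y Ny) Yr nS0r).
  split; congruence.
Qed.

(* The intersection N of all (c,c)-splits containing s is itself one. Were t
   in N, N would be a module overlapped by some R, and N /\ R or its
   complement would be a smaller (c,c)-split containing s. *)
Lemma symmetric_split_type {Y C : V -> Prop} {c u v w} :
  is_module d Y -> is_strong d Y -> is_split Y c c C -> C u -> Y v -> ~ C v ->
  type_of d Y w -> w = c.
Proof.
  intros HY SY HC Cu Yv nCv Tw.
  destruct (type_of_inv HY Tw) as [s [t [Ys [Yt [nst <-]]]]].
  set (N := fun z => Y z /\ forall S, is_split Y c c S /\ S s -> S z).
  assert (HN : is_split Y c c N) by (apply split_bigcap; intros S [HS _]; exact HS).
  assert (Ns : N s) by (split; [auto|intros S [_ Ss]; exact Ss]).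
  destruct (classic (N t)) as [Nt|nNt]; [exfalso|exact (proj1 (proj2 HN s t Ns Yt nNt))].
  assert (ex_k : exists k, Y k /\ ~ N k).
  { destruct (classic (C s)) as [Cs|nCs].
    - exists v. split; [auto|intros [_ h]; exact (nCv (h C (conj HC Cs)))].
    - exists u. split; [exact (proj1 HC u Cu)|].
      intros [_ h]. exact (proj2 (h _ (conj (split_compl HC) (conj Ys nCs))) Cu). }
  destruct ex_k as [k [Yk nNk]].
  destruct (overlapping_module (split_module HY HN) (proj1 HN) Yk nNk Ns Nt nst)
    as [R [HR [[n [Nn Rn]] [[w [Nw nRw]] [r [Rr nNr]]]]]].
  assert (Yr : Y r) by exact (sub_strong SY HR Rn (proj1 Nn) (proj1 Nw) nRw r Rr).
  assert (ex_S0 : exists S0, is_split Y c c S0 /\ S0 s /\ ~ S0 r).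
  { apply NNPP. intro no. apply nNr. split; [auto|].
    intros S [HS Ss]. apply NNPP. intro. apply no. eauto. }
  destruct ex_S0 as [S0 [HS0 [S0s nS0r]]].
  assert (HNR := split_meet_module HN HS0 (fun z Nz => proj2 Nz S0 (conj HS0 S0s)) HR Rr Yr nS0r).
  destruct (classic (R s)) as [Rs|nRs].
  - exact (nRw (proj2 (proj2 Nw _ (conj HNR (conj Ns Rs))))).
  - refine (proj2 (proj2 Nn _ (conj (split_compl HNR) (conj Ys _))) (conj Nn Rn)).
    intros [_ h]. auto.
Qed.

Lemma proper_split_of_type {Y C : V -> Prop} {c1 c2 u v a b} :
  is_module d Y -> is_strong d Y -> is_split Y c1 c2 C -> C u -> Y v -> ~ C v ->
  type_of d Y a -> type_of d Y b -> (forall w, type_of d Y w -> w = a \/ w = b) ->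
  exists C' u' v', is_split Y a b C' /\ C' u' /\ Y v' /\ ~ C' v'.
Proof.
  intros HY SY HC Cu Yv nCv Ta Tb Tab.
  destruct (split_type HY SY HC Cu Yv nCv) as [T1 T2].
  destruct (Tab c1 T1) as [->| ->], (Tab c2 T2) as [->| ->].
  - rewrite <- (symmetric_split_type HY SY HC Cu Yv nCv Tb) in HC at 2.
    exists C, u, v. auto.
  - exists C, u, v. auto.
  - exists (fun z => Y z /\ ~ C z), v, u.
    split; [exact (split_compl HC)|split; [auto|split; [exact (proj1 HC u Cu)|]]].
    intros [_ h]. auto.
  - rewrite <- (symmetric_split_type HY SY HC Cu Yv nCv Ta) in HC at 1.
    exists C, u, v. auto.
Qed.

Lemma no_split_of_module_union {X Y C : V -> Prop} {x0 y0 u v} :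
  is_module d X -> is_module d Y -> disjoint X Y -> X x0 -> Y y0 -> is_strong d Y ->
  is_module d (fun z => X z \/ Y z) ->
  is_split Y (d x0 y0) (d y0 x0) C -> C u -> Y v -> ~ C v -> False.
Proof.
  intros HX HY dXY Xx0 Yy0 SY HXY HC Cu Yv nCv.
  assert (HXC : is_module d (fun z => X z \/ C z)).
  { apply (@module_of_base _ x0 (or_introl Xx0)).
    intros z t nz [Xt|Ct]; [apply HX; auto|].
    destruct (classic (Y z)) as [Yz|nYz].
    - destruct (proj2 HC t z Ct Yz (fun h => nz (or_intror h))) as [-> ->].
      rewrite (module_cross HX HY dXY Xx0 Yy0 Xx0 Yz).
      rewrite (module_cross HY HX (fun z Yz Xz => dXY z Xz Yz) Yy0 Xx0 Yz Xx0).
      auto.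
    - apply HXY; [intros [h|h]; auto|right; exact (proj1 HC t Ct)|left; auto]. }
  assert (Yu : Y u) by exact (proj1 HC u Cu).
  refine (dXY x0 Xx0 (sub_strong SY HXC (or_intror Cu) Yu Yv _ x0 (or_introl Xx0))).
  intros [Xv|Cv]; [exact (dXY v Xv Yv)|auto].
Qed.

Lemma split_of_max_modules {Y : V -> Prop} {w r n} :
  is_strong d Y -> Y w -> Y r -> ~ compeq d Y w r ->
  max_module w r n -> max_module r w n ->
  is_split Y (d w r) (d r w) (fun z => max_module w r z /\ ~ max_module r w z).
Proof.
  intros SY Yw Yr nwr Ln Kn.
  split; [intros z [Lz _]; exact (max_module_sub SY Yw Yr z Lz)|].
  intros x y [Lx nKx] Yy nCy.
  assert (Ky : max_module r w y).
  { destruct (max_module_cover SY Yw Yr nwr Ln Kn y Yy) as [Ly|Ky]; auto.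
    apply NNPP. intro. apply nCy. auto. }
  destruct (max_module_module r w x y r nKx Ky (max_module_self Kn)).
  destruct (max_module_module w r r x w (@max_module_notin w r) Lx (max_module_self Ln)).
  split; congruence.
Qed.

Lemma split_of_two_components {Y : V -> Prop} {p q} :
  is_module d Y -> Y p -> Y q -> ~ compeq d Y p q ->
  (forall y, Y y -> compeq d Y p y \/ compeq d Y q y) ->
  is_split Y (d p q) (d q p) (comp d Y p).
Proof.
  intros HY Yp Yq npq two. split; [intros z [h _]; auto|].
  intros x y Cx Yy nCy.
  assert (Cy : comp d Y q y).
  { split; [auto|]. destruct (two y Yy) as [h|h]; [exfalso; apply nCy; split|]; auto. }
  assert (Hp := comp_module HY Yp). assert (Hq := comp_module HY Yq).
  assert (dpq : disjoint (comp d Y p) (comp d Y q)).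
  { intros z [_ pz] [_ qz]. exact (npq (compeq_trans pz (compeq_sym qz))). }
  assert (dqp : disjoint (comp d Y q) (comp d Y p)) by (intros z qz pz; exact (dpq z pz qz)).
  split.
  - exact (module_cross Hp Hq dpq (comp_refl Yp) (comp_refl Yq) Cx Cy).
  - exact (module_cross Hq Hp dqp (comp_refl Yq) (comp_refl Yp) Cy Cx).
Qed.

Lemma quotient_module_union {Y : V -> Prop} {Q x1} :
  is_module d Y -> quotient_module d Y Q -> Y x1 -> Q (comp d Y x1) ->
  is_module d (fun z => Y z /\ Q (comp d Y z)).
Proof.
  intros HY [_ Qmod] Yx1 Qx1. apply (@module_of_base _ x1 (conj Yx1 Qx1)).
  intros z t nz [Yt Qt].
  destruct (classic (Y z)) as [Yz|nYz]; [|apply HY; auto].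
  assert (nQz : ~ Q (comp d Y z)) by (intro; apply nz; auto).
  assert (sep : forall t', Q (comp d Y t') -> ~ compeq d Y z t')
    by (intros t' Qt' c; apply nQz; rewrite (comp_eq c); auto).
  destruct (Qmod _ _ _ (ex_intro _ z (conj Yz eq_refl)) nQz Qt Qx1) as [E1 E2].
  assert (D1 : dval d (comp d Y z) (comp d Y x1) (d z t))
    by (rewrite <- E1; apply comp_dval; auto).
  assert (D2 : dval d (comp d Y x1) (comp d Y z) (d t z))
    by (rewrite <- E2; apply comp_dval; auto; intro c; exact (sep t Qt (compeq_sym c))).
  apply comp_dval in D1; auto. apply comp_dval in D2; auto.
  intro c. exact (sep x1 Qx1 (compeq_sym c)).
Qed.

Lemma nontrivial_quotient_module {Y : V -> Prop} :
  (exists I1 I2 I3, components d Y I1 /\ components d Y I2 /\ components d Y I3 /\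
     I1 <> I2 /\ I1 <> I3 /\ I2 <> I3) ->
  ~ quotient_prime d Y ->
  exists Q x1 x2 k, quotient_module d Y Q /\ Y x1 /\ Y x2 /\ Y k /\
    Q (comp d Y x1) /\ Q (comp d Y x2) /\ ~ compeq d Y x1 x2 /\ ~ Q (comp d Y k).
Proof.
  intros three nprime.
  destruct (not_all_ex_not _ _ (fun h => nprime (conj three h))) as [Q hQ].
  destruct (imply_to_and _ _ hQ) as [qm triv].
  destruct (not_or_and _ _ triv) as [nempty triv'].
  destruct (not_or_and _ _ triv') as [nsingle nfull].
  destruct (not_all_ex_not _ _ nempty) as [I QI]. apply NNPP in QI.
  destruct (proj1 qm I QI) as [x1 [Yx1 ->]].
  destruct (classic (exists J, Q J /\ J <> comp d Y x1)) as [[J [QJ nJ]]|nJ].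
  2:{ exfalso. apply nsingle. exists (comp d Y x1). intro J. split; [|intros ->; auto].
      intro QJ. apply NNPP. intro. apply nJ. eauto. }
  destruct (proj1 qm J QJ) as [x2 [Yx2 ->]].
  destruct (classic (exists K, components d Y K /\ ~ Q K)) as [[K [[k [Yk ->]] nQK]]|nK].
  2:{ exfalso. apply nfull. intro K. split; [apply (proj1 qm)|].
      intro cK. apply NNPP. intro. apply nK. eauto. }
  exists Q, x1, x2, k.
  refine (conj qm (conj Yx1 (conj Yx2 (conj Yk (conj QI (conj QJ (conj _ nQK))))))).
  intro c. exact (nJ (eq_sym (comp_eq c))).
Qed.

(* With two components, take one of them. Otherwise a non-trivial quotient
   module U is overlapped by a module R, and the maximal modules separating a
   point of U \ R from a point of R \ U cover Y. *)
Lemma proper_split_of_not_prime {Y : V -> Prop} {p q} :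
  is_module d Y -> is_strong d Y -> Y p -> Y q -> ~ compeq d Y p q ->
  ~ quotient_prime d Y ->
  exists a b C u v, is_split Y a b C /\ C u /\ Y v /\ ~ C v.
Proof.
  intros HY SY Yp Yq npq nprime.
  destruct (classic (exists I1 I2 I3, components d Y I1 /\ components d Y I2 /\
     components d Y I3 /\ I1 <> I2 /\ I1 <> I3 /\ I2 <> I3)) as [three|nthree].
  - destruct (nontrivial_quotient_module three nprime)
      as [Q [x1 [x2 [k [qm [Yx1 [Yx2 [Yk [Qx1 [Qx2 [n12 nQk]]]]]]]]]]].
    set (U := fun z => Y z /\ Q (comp d Y z)).
    assert (HU : is_module d U) by exact (quotient_module_union HY qm Yx1 Qx1).
    destruct (overlapping_module (S := U) HU (fun z h => proj1 h) Yk (fun h => nQk (proj2 h))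
                (conj Yx1 Qx1) (conj Yx2 Qx2) n12)
      as [R [HR [[n [Un Rn]] [[w [Uw nRw]] [r [Rr nUr]]]]]].
    assert (Yw : Y w) by exact (proj1 Uw).
    assert (Yr : Y r) by exact (sub_strong SY HR Rn (proj1 Un) Yw nRw r Rr).
    assert (nwr : ~ compeq d Y w r).
    { intro c. apply nUr. split; [auto|]. rewrite <- (comp_eq c). exact (proj2 Uw). }
    assert (Ln : max_module w r n) by (exists U; auto).
    assert (Kn : max_module r w n) by (exists R; auto).
    exists (d w r), (d r w), (fun z => max_module w r z /\ ~ max_module r w z), w, r.
    split; [exact (split_of_max_modules SY Yw Yr nwr Ln Kn)|].
    split; [split; [exact (max_module_self Ln)|apply max_module_notin]|].
    split; [auto|intros [h _]; exact (max_module_notin h)].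
  - assert (two : forall y, Y y -> compeq d Y p y \/ compeq d Y q y).
    { intros y Yy. apply NNPP. intro ny. apply nthree.
      exists (comp d Y p), (comp d Y q), (comp d Y y).
      repeat split; try (eexists; split; [|reflexivity]; assumption).
      - exact (comp_neq Yq npq).
      - apply (comp_neq Yy). intro c. apply ny. left. exact c.
      - apply (comp_neq Yy). intro c. apply ny. right. exact c. }
    exists (d p q), (d q p), (comp d Y p), p, q.
    split; [exact (split_of_two_components HY Yp Yq npq two)|].
    split; [exact (comp_refl Yp)|split; [auto|intros [_ h]; auto]].
Qed.

End BinaryStructure.

Theorem lemma6p9 (V W : Type) (d : V -> V -> W) (X Y : V -> Prop) :
  is_module d X -> is_module d Y -> disjoint X Y ->
  (exists x, X x) -> (exists y, Y y) ->
  is_robust d Y ->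
  (exists y1 y2, Y y1 /\ Y y2 /\ y1 <> y2) ->
  ~ quotient_prime d Y ->
  (forall w, (dval d X Y w \/ dval d Y X w) <-> type_of d Y w) ->
  ~ is_module d (fun z => X z \/ Y z).
Proof.
  intros HX HY dXY [x0 Xx0] [y0 Yy0] Hrob [y1 [y2 [Yy1 [Yy2 n12]]]] nprime Ht HXY.
  destruct (robust_pair d Hrob Yy1 Yy2 n12) as [SY [p [q [Yp [Yq npq]]]]].
  destruct (proper_split_of_not_prime d HY SY Yp Yq npq nprime)
    as [a [b [C [u [v [HC [Cu [Yv nCv]]]]]]]].
  assert (dYX : disjoint Y X) by (intros z Yz Xz; exact (dXY z Xz Yz)).
  assert (Txy : type_of d Y (d x0 y0)) by (apply Ht; left; exists x0, y0; auto).
  assert (Tyx : type_of d Y (d y0 x0)) by (apply Ht; right; exists y0, x0; auto).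
  assert (type_XY : forall w, type_of d Y w -> w = d x0 y0 \/ w = d y0 x0).
  { intros w Tw. apply Ht in Tw. destruct Tw as [D|D]; [left|right]; symmetry.
    - exact (proj1 (dval_modules d w HX HY dXY Xx0 Yy0) D).
    - exact (proj1 (dval_modules d w HY HX dYX Yy0 Xx0) D). }
  destruct (proper_split_of_type d HY SY HC Cu Yv nCv Txy Tyx type_XY)
    as [C' [u' [v' [HC' [Cu' [Yv' nCv']]]]]].
  exact (no_split_of_module_union d HX HY dXY Xx0 Yy0 SY HXY HC' Cu' Yv' nCv').
Qed.
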